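(* Let $(X,d,\mathfrak{m},p)$ be a pointed metric measure space, and assume that for each $R>r>0$ there is $C(R,r)>0$ such that $\mathfrak{m}(B_x(R,X))\leq C(R,r)\cdot\mathfrak{m}(B_x(r,X))$ for every $x\in X$. Then for each $[a,b]\subset(0,\infty)$, any discrete group $\Gamma\leq\mathrm{Iso}(X)$ and any short basis $\beta\subset\Gamma$ with respect to $p$, there are at most $C(3b,a/2)$ elements of $\beta$ with norm $\|\cdot\|_p$ in $[a,b]$.
   Context: For $g\in\Gamma$, $\|g\|_p:=d(gp,p)$. A short basis of $\Gamma$ with respect to $p$ is a countable collection $\{\gamma_1,\gamma_2,\dots\}\subset\Gamma$ such that each $\gamma_{j+1}$ is an element of minimal norm in $\Gamma\setminus\langle\gamma_1,\dots,\gamma_j\rangle$. *)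

From HB Require Import structures.
From mathcomp Require Import all_boot all_order all_algebra.
From mathcomp Require Import all_classical all_reals all_analysis.
Set Implicit Arguments. Unset Strict Implicit. Unset Printing Implicit Defensive.
Import Order.TTheory GRing.Theory Num.Theory.
Local Open Scope classical_set_scope.
Local Open Scope ring_scope.

Section Defs.
Variables (R : realType) (X : Type) (dist : X -> X -> R).

Definition is_metric : Prop :=
  [/\ (forall x y, 0 <= dist x y),
      (forall x y, dist x y = 0 <-> x = y),
      (forall x y, dist x y = dist y x) &
      (forall x y z, dist x z <= dist x y + dist y z)].

Definition cauchy_seq (u : nat -> X) : Prop :=
  forall e : R, 0 < e -> exists N, forall m n, (N <= m)%N -> (N <= n)%N ->
    dist (u m) (u n) < e.

Definition converges_to (u : nat -> X) (l : X) : Prop :=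
  forall e : R, 0 < e -> exists N, forall n, (N <= n)%N -> dist (u n) l < e.

Definition complete_metric : Prop :=
  forall u, cauchy_seq u -> exists l, converges_to u l.

Definition separable_metric : Prop :=
  exists u : nat -> X, forall x (e : R), 0 < e -> exists n, dist x (u n) < e.

Definition oball (x : X) (r : R) : set X := [set y | dist x y < r].

Definition isometry (f : X -> X) : Prop :=
  (forall x y, dist (f x) (f y) = dist x y) /\ (forall y, exists x, f x = y).

Definition is_subgroup (H : set (X -> X)) : Prop :=
  [/\ H `<=` isometry,
      H id,
      (forall g h, H g -> H h -> H (g \o h)) &
      (forall g, H g -> exists h, [/\ H h, g \o h = id & h \o g = id])].

Definition gen_subgroup (S : set (X -> X)) : set (X -> X) :=
  [set g | forall H, is_subgroup H -> S `<=` H -> H g].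

(* Gamma is discrete in Iso(X) (compact-open topology = topology of
   pointwise convergence on isometries): the identity is isolated. *)
Definition discrete_subgroup (G : set (X -> X)) : Prop :=
  exists (n : nat) (K : nat -> X) (e : R), 0 < e /\
    forall g, G g -> (forall i, (i < n)%N -> dist (g (K i)) (K i) < e) ->
      g = id.

Definition iso_norm (p : X) (g : X -> X) : R := dist (g p) p.

(* index range of a countable (finite of length n, or infinite) family *)
Definition in_range (len : option nat) (j : nat) : Prop :=
  if len is Some n then (j < n)%N else True.

Definition first_gens (gam : nat -> X -> X) (j : nat) : set (X -> X) :=
  [set g | exists2 i, (i < j)%N & g = gam i].

Definition short_basis (G : set (X -> X)) (p : X)
    (gam : nat -> X -> X) (len : option nat) : Prop :=
  (forall j, in_range len j ->
     [/\ G (gam j),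
         ~ gen_subgroup (first_gens gam j) (gam j) &
         forall g, G g -> ~ gen_subgroup (first_gens gam j) g ->
           iso_norm p (gam j) <= iso_norm p g]) /\
  (forall n, len = Some n -> G `<=` gen_subgroup (first_gens gam n)).

End Defs.

From Pilot Require Import Defs.
From HB Require Import structures.
From mathcomp Require Import all_boot all_order all_algebra.
From mathcomp Require Import all_classical all_reals all_analysis.
From mathcomp Require Import lra.
Set Implicit Arguments. Unset Strict Implicit. Unset Printing Implicit Defensive.
Import Order.TTheory GRing.Theory Num.Theory.
Local Open Scope classical_set_scope.
Local Open Scope ring_scope.

(* By the minimality in the definition of a short basis, [gam_i^-1 gam_j]
   (for i < j) is no shorter than [gam_j], i.e. d(gam_i p, gam_j p) >=
   ||gam_j||_p.  Hence when all the norms lie in [a, b], the balls of radius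
   a/2 around the points gam_j p are pairwise disjoint and contained in
   B_p(b + a/2), which is itself contained in each B_(gam_j p)(3b).  The
   doubling hypothesis gives m(B_p(b + a/2)) <= C(3b, a/2) m(B_(gam_j p)(a/2))
   for every j, and summing over the disjoint balls bounds their number by
   C(3b, a/2). *)

Lemma measure_packing (d : measure_display) (T : measurableType d)
    (R : realType) (mu : {measure set T -> \bar R}) (I : choiceType)
    (A : set T) (B : I -> set T) (s : seq I) (c : R) :
  0 <= c -> measurable A -> (0 < mu A < +oo)%E ->
  uniq s -> (forall i, i \in s -> measurable (B i)) -> trivIset [set` s] B ->
  {in s, forall i, B i `<=` A} ->
  {in s, forall i, mu A <= c%:E * mu (B i)}%E ->
  (size s)%:R <= c.
Proof.
move=> c_ge0 mA /andP[muA_gt0 muA_fin] s_uniq mB tB BA muAB.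
have [m muAm] : exists m, mu A = m%:E.
  by move: muA_gt0 muA_fin; case: (mu A) => [m| |] //; exists m.
have m_gt0 : 0 < m by rewrite -lte_fin -muAm.
have mUB : measurable (\bigcup_(i in [set` s]) B i).
  by apply: fin_bigcup_measurable; [exact: finite_seq | move=> i /mB].
have : (((size s)%:R * m)%:E <= (c * m)%:E)%E.
  have -> : ((size s)%:R * m)%:E = \sum_(i <- s) mu A.
    by rewrite muAm sumEFin big_const_seq count_predT iter_addr_0 mulr_natl.
  apply: (@le_trans _ _ (\sum_(i <- s) (c%:E * mu (B i)))%E).
    by rewrite !big_seq; apply: lee_sum => i /muAB.
  rewrite -ge0_sume_distrr // fsbig_seq // -measure_fin_bigcup ?finite_seq //.
  rewrite EFinM -muAm; apply: lee_wpmul2l; first by rewrite lee_fin.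
  by apply: le_measure; rewrite ?inE //; apply: bigcup_sub => i /BA.
by rewrite lee_fin ler_pM2r.
Qed.

Section Balls.
Variables (R : realType) (X : Type) (dist : X -> X -> R).
Hypothesis dist_metric : is_metric dist.

Lemma oball_sub (x y : X) (r r' : R) :
  dist x y + r <= r' -> oball dist y r `<=` oball dist x r'.
Proof.
case: dist_metric => _ _ _ dist_tri xyr z /= yz.
by apply: le_lt_trans (dist_tri _ y _) _; apply: lt_le_trans xyr; rewrite ltrD2l.
Qed.

Lemma oball_disjoint (x y : X) (r r' : R) :
  r + r' <= dist x y -> oball dist x r `&` oball dist y r' = set0.
Proof.
case: dist_metric => _ _ dist_sym dist_tri rxy; apply/seteqP; split=> // z [/= xz yz].
have : dist x y < r + r'.
  by apply: le_lt_trans (dist_tri x z y) _; rewrite (dist_sym z); exact: ltrD.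
by rewrite ltNge rxy.
Qed.

End Balls.

Section ShortBasis.
Variables (R : realType) (X : Type) (dist : X -> X -> R).

Lemma gen_subgroup_sub (S : set (X -> X)) : S `<=` gen_subgroup dist S.
Proof. by move=> g Sg H _; apply. Qed.

Lemma gen_subgroup_comp (S : set (X -> X)) (g h : X -> X) :
  gen_subgroup dist S g -> gen_subgroup dist S h ->
  gen_subgroup dist S (g \o h).
Proof.
move=> Sg Sh H H_sub SH; have [_ _ H_comp _] := H_sub.
exact: H_comp (Sg H H_sub SH) (Sh H H_sub SH).
Qed.

Lemma iso_norm_comp_inv (p : X) (g : X -> X) {f h : X -> X} :
  Defs.isometry dist f -> f \o h = id ->
  iso_norm dist p (h \o g) = dist (g p) (f p).
Proof.
move=> [f_iso _] fh; rewrite /iso_norm -f_iso /=.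
by have /= -> := congr1 (fun k => k (g p)) fh.
Qed.

Lemma in_range_leq {len : option nat} {i j : nat} :
  (i <= j)%N -> in_range len j -> in_range len i.
Proof. by case: len => //= n; apply: leq_ltn_trans. Qed.

Lemma short_basis_norm_le_dist (G : set (X -> X)) (p : X)
    (gam : nat -> X -> X) (len : option nat) (i j : nat) :
  is_subgroup dist G -> short_basis dist G p gam len ->
  (i < j)%N -> in_range len j ->
  iso_norm dist p (gam j) <= dist (gam j p) (gam i p).
Proof.
move=> [G_iso _ G_comp G_inv] [basis _] ij rj.
have [Gi _ _] := basis i (in_range_leq (ltnW ij) rj).
have [Gj gam_j_new gam_j_min] := basis j rj.
have [h [Gh gam_i_h _]] := G_inv _ Gi.
rewrite -(iso_norm_comp_inv p (gam j) (G_iso _ Gi) gam_i_h).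
apply: gam_j_min; first exact: G_comp Gh Gj.
move=> gen_h_gam_j; apply: gam_j_new.
have -> : gam j = gam i \o (h \o gam j) by rewrite compA gam_i_h.
by apply: gen_subgroup_comp => //; apply: gen_subgroup_sub; exists i.
Qed.

Lemma short_basis_separated (G : set (X -> X)) (p : X)
    (gam : nat -> X -> X) (len : option nat) (a : R) (i j : nat) :
  is_metric dist -> is_subgroup dist G -> short_basis dist G p gam len ->
  i != j -> in_range len i -> in_range len j ->
  a <= iso_norm dist p (gam i) -> a <= iso_norm dist p (gam j) ->
  a <= dist (gam i p) (gam j p).
Proof.
move=> [_ _ dist_sym _] G_sub basis + ri rj ai aj.
case: ltngtP => // [ij | ji] _.
- by rewrite dist_sym; apply: le_trans aj (short_basis_norm_le_dist G_sub basis _ _).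
- exact: le_trans ai (short_basis_norm_le_dist G_sub basis _ _).
Qed.

End ShortBasis.

Theorem mainTheorem12 (R : realType) (dd : measure_display)
  (X : measurableType dd) (dist : X -> X -> R)
  (mu : {measure set X -> \bar R}) (p : X)
  (Hmetric : is_metric dist)
  (Hcomplete : complete_metric dist)
  (Hsep : separable_metric dist)
  (Hballs_meas : forall x r, measurable (oball dist x r))
  (Hfinite : forall x r, 0 < r -> (mu (oball dist x r) < +oo)%E)
  (Hsupp : forall x r, 0 < r -> (0 < mu (oball dist x r))%E)
  (C : R -> R -> R)
  (HCpos : forall Rr r, 0 < r -> r < Rr -> 0 < C Rr r)
  (HC : forall Rr r, 0 < r -> r < Rr -> forall x,
      (mu (oball dist x Rr) <= (C Rr r)%:E * mu (oball dist x r))%E)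
  (a b : R) (Ha : 0 < a) (Hab : a <= b)
  (G : set (X -> X)) (HG : is_subgroup dist G)
  (Hdisc : discrete_subgroup dist G)
  (gam : nat -> X -> X) (len : option nat)
  (Hbasis : short_basis dist G p gam len)
  (s : seq nat) (Hs_uniq : uniq s)
  (Hs : forall j, j \in s ->
     in_range len j /\ a <= iso_norm dist p (gam j) <= b) :
  (size s)%:R <= C (3 * b) (a / 2).
Proof.
have [_ _ dist_sym _] := Hmetric.
have a2_gt0 : 0 < a / 2 by lra.
have a2_lt_3b : a / 2 < 3 * b by lra.
apply: (measure_packing (A := oball dist p (b + a / 2))
                        (B := fun j => oball dist (gam j p) (a / 2))) => //.
- exact/ltW/HCpos.
- by apply/andP; split; [apply: Hsupp | apply: Hfinite]; lra.
- move=> i j /= si sj [z Bz]; apply: contrapT => /eqP ij.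
  have [ri /andP[ai _]] := Hs i si; have [rj /andP[aj _]] := Hs j sj.
  suff sep : a / 2 + a / 2 <= dist (gam i p) (gam j p).
    by rewrite (oball_disjoint Hmetric sep) in Bz.
  by rewrite -splitr; exact: short_basis_separated Hmetric HG Hbasis ij ri rj ai aj.
- move=> j /Hs [_ /andP[_ jb]]; apply: oball_sub => //.
  by rewrite dist_sym lerD2r.
- move=> j /Hs [_ /andP[_ jb]]; apply: le_trans (HC _ _ a2_gt0 a2_lt_3b _).
  apply: le_measure; rewrite ?inE //; apply: oball_sub => //.
  rewrite /iso_norm in jb; lra.
Qed.
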